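(* Suppose $(f_0,\dots,f_4)$ is a rational solution of $A_4(\alpha_0,\dots,\alpha_4)$ and some of $f_0,\dots,f_4$ have a pole at $t=\infty$. Then one of the following holds (indices modulo 5): (1) for some $i$, $f_i$ has a pole of first order at $t=\infty$; (2) for some $i$, $f_i,f_{i+1},f_{i+3}$ have a pole of first order at $t=\infty$; (3) for some $i$, $f_i,f_{i+1},f_{i+2}$ have a pole of first order at $t=\infty$; (4) all of $f_0,\dots,f_4$ have a pole of first order at $t=\infty$.
   Context: The $A_4^{(1)}$ Painlevé equation $A_4(\alpha_0,\dots,\alpha_4)$ with complex parameters $\alpha_j$ is the system for five functions $f_0,\dots,f_4$ of $t$ (indices in $\mathbb{Z}/5\mathbb{Z}$, ${}'=d/dt$): $f_j'=f_j(f_{j+1}-f_{j+2}+f_{j+3}-f_{j+4})+\alpha_j$ ($j=0,\dots,4$), $f_0+\dots+f_4=t$; hence $\sum_j\alpha_j=1$. A rational solution is a tuple of rational functions of $t$ satisfying it. *)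

From HB Require Import structures.
From mathcomp Require Import all_boot all_order all_algebra.
From mathcomp Require Import fraction.
Notation "x %:F" := (@FracField.tofrac _ x).
Set Implicit Arguments. Unset Strict Implicit. Unset Printing Implicit Defensive.
Import Order.TTheory GRing.Theory Num.Theory.
Local Open Scope ring_scope.

(* Rational functions of t over a field C (of complex numbers) are elements of
   the fraction field {fraction {poly C}}; a rational function is presented as
   p / q with p, q polynomials, q <> 0. *)
Definition ratf (C : fieldType) (p q : {poly C}) : {fraction {poly C}} :=
  (p%:F) / (q%:F).

Definition ratd (C : fieldType) (p q : {poly C}) : {fraction {poly C}} :=
  ((p^`() * q - p * q^`())%:F) / ((q * q)%:F).

Definition ratc (C : fieldType) (a : C) : {fraction {poly C}} := (a%:P)%:F.

Definition sh (j : 'I_5) (k : nat) : 'I_5 := inord ((j + k) %% 5).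

Definition A4_rational_solution (C : fieldType) (alpha : 'I_5 -> C)
    (P Q : 'I_5 -> {poly C}) : Prop :=
  (forall j, Q j != 0) /\
  (forall j, ratd (P j) (Q j) =
     ratf (P j) (Q j) *
       (ratf (P (sh j 1)) (Q (sh j 1)) - ratf (P (sh j 2)) (Q (sh j 2))
        + ratf (P (sh j 3)) (Q (sh j 3)) - ratf (P (sh j 4)) (Q (sh j 4)))
     + ratc (alpha j)) /\
  (\sum_(j < 5) ratf (P j) (Q j) = ('X)%:F).

(* p/q (q <> 0) has a pole at t = oo iff deg p > deg q; the pole order is
   deg p - deg q (= size p - size q). *)
Definition pole_at_infty (C : fieldType) (p q : {poly C}) : Prop :=
  (size q < size p)%N.
Definition simple_pole_at_infty (C : fieldType) (p q : {poly C}) : Prop :=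
  size p = (size q).+1.

From HB Require Import structures.
From mathcomp Require Import all_boot all_order all_algebra.
From mathcomp Require Import fraction ring zify.
Set Implicit Arguments.
Unset Strict Implicit.
Unset Printing Implicit Defensive.

Import Order.TTheory GRing.Theory Num.Theory.
Local Open Scope ring_scope.

(* Write f_j = F_j / D over the common denominator D = Q_0 ... Q_4 and let N be
   the largest degree of the F_j. If some f_j has a pole at infinity then
   N > deg D, and in the polynomial form
     F_j' D - F_j D' = F_j (F_(j+1) - F_(j+2) + F_(j+3) - F_(j+4)) + alpha_j D^2
   of the equations the bracket has degree < deg D. Hence the coefficients a_j
   of t^N in the F_j satisfy a_(j+1) - a_(j+2) + a_(j+3) - a_(j+4) = 0 whenever
   a_j <> 0. Following a run of the cyclic support of a from its start, this
   linear system forces the support to have one of the four listed shapes and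
   sum_j a_j <> 0. As sum_j F_j = t D has degree deg D + 1, N = deg D + 1: the
   f_j with a pole at infinity are exactly those with a_j <> 0, and the poles
   are simple. *)

Lemma val_sh (j : 'I_5) k : nat_of_ord (sh j k) = ((j + k) %% 5)%N.
Proof. by rewrite /sh inordK // ltn_mod. Qed.

Lemma shD (j : 'I_5) m k : sh (sh j m) k = sh j (m + k).
Proof. by apply: val_inj => /=; rewrite !val_sh modnDml addnA. Qed.

Lemma sh0 (j : 'I_5) : sh j 0 = j.
Proof. by apply: val_inj => /=; rewrite val_sh addn0 modn_small. Qed.

Lemma shS5 (j : 'I_5) k : sh j k.+4.+1 = sh j k.
Proof. by apply: val_inj => /=; rewrite !val_sh; lia. Qed.

Lemma sh_cases (i j : 'I_5) :
  j = i \/ j = sh i 1 \/ j = sh i 2 \/ j = sh i 3 \/ j = sh i 4.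
Proof.
have [k k5 ->] : exists2 k, (k < 5)%N & j = sh i k.
  exists ((j + 5 - i) %% 5)%N; first by rewrite ltn_mod.
  apply: val_inj => /=; rewrite val_sh; have := ltn_ord i; have := ltn_ord j; lia.
by case: k k5 => [|[|[|[|[|]]]]] // _; rewrite ?sh0; tauto.
Qed.

Definition alt5 (R : zmodType) (a : 'I_5 -> R) (j : 'I_5) : R :=
  a (sh j 1) - a (sh j 2) + a (sh j 3) - a (sh j 4).

Lemma alt5_sh (R : zmodType) (a : 'I_5 -> R) i k :
  alt5 a (sh i k) = a (sh i k.+1) - a (sh i k.+2) + a (sh i k.+3) - a (sh i k.+4).
Proof. by rewrite /alt5 !shD addn1 addn2 addn3 addn4. Qed.

Lemma sum_sh (R : zmodType) (a : 'I_5 -> R) i :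
  \sum_j a j = a i + a (sh i 1) + a (sh i 2) + a (sh i 3) + a (sh i 4).
Proof.
have sh_inj : injective (sh i : 'I_5 -> 'I_5).
  move=> k l /(congr1 val) /=; rewrite !val_sh => e; apply: val_inj => /=.
  have := ltn_ord k; have := ltn_ord l; have := ltn_ord i; lia.
by rewrite (reindex_inj sh_inj) !big_ord_recr big_ord0 /= add0r sh0.
Qed.

Lemma alt5_add_next (R : zmodType) (a : 'I_5 -> R) j :
  alt5 a j + alt5 a (sh j 1) = a (sh j 1) - a j.
Proof.
rewrite -[in alt5 a j](sh0 j) !alt5_sh shS5 sh0.
by rewrite !addrA (addrAC _ (- a (sh j 4))) (addrAC _ (- a (sh j 2))) subrK
  (addrAC _ (- a (sh j 4))) addrK subrK.
Qed.

Lemma alt5_eq0_const (R : zmodType) (a : 'I_5 -> R) :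
  (forall j, alt5 a j = 0) -> forall j k, a (sh j k) = a j.
Proof.
move=> alt0 j; elim=> [|k IHk]; first by rewrite sh0.
rewrite -addn1 -shD -IHk; apply/eqP.
by rewrite -subr_eq0 -alt5_add_next !alt0 addr0.
Qed.

(* [b_k] stands for [a_(i+k)] along a run of the support starting at [i], so
   that [a_(i-1) = a_(i+4) = 0]. *)
Lemma run_support_cases (R : numDomainType) (b0 b1 b2 b3 : R) : b0 != 0 ->
  b1 - b2 + b3 = 0 -> (b1 != 0 -> b2 - b3 - b0 = 0) ->
  (b2 != 0 -> b3 + b0 - b1 = 0) -> (b3 != 0 -> - b0 + b1 - b2 = 0) ->
  b0 + b1 + b2 + b3 != 0 /\
  [|| [&& b1 == 0, b2 == 0 & b3 == 0], [&& b1 == 0, b2 != 0 & b3 != 0],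
      [&& b1 != 0, b2 == 0 & b3 != 0] | [&& b1 != 0, b2 != 0 & b3 == 0]].
Proof.
move=> nz0 L0 L1 L2 L3.
case: (eqVneq b1 0) L0 L1 L2 L3 => [-> | nz1] L0 L1 L2 L3;
case: (eqVneq b2 0) L0 L1 L2 L3 => [-> | nz2] L0 L1 L2 L3;
case: (eqVneq b3 0) L0 L1 L2 L3 => [-> | nz3] L0 L1 L2 L3;
  rewrite ?eqxx ?nz1 ?nz2 ?nz3 ?orbT.
- by rewrite !addr0.
- by move: nz3; rewrite -L0 subrr add0r eqxx.
- by move: nz2; rewrite -oppr_eq0 -L0 sub0r addr0 eqxx.
- have -> : b0 + 0 + b2 + b3 = (b3 + b0 - 0) - (0 - b2 + b3) + b3 by ring.
  by rewrite L2 // L0 subrr add0r.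
- by move: nz1; rewrite -L0 subr0 addr0 eqxx.
- have -> : b0 + b1 + 0 + b3 = b1 + (b1 - 0 + b3) - (- b0 + b1 - 0) by ring.
  by rewrite L0 L3 // subr0 addr0.
- have -> : b0 + b1 + b2 + 0 = b0 *+ 3 + (b1 - b2 + 0) + (b2 - 0 - b0) *+ 2 by ring.
  by rewrite L0 L1 // mul0rn !addr0 mulrn_eq0.
- have e3 : b3 = (b1 - b2 + b3) + (b2 - b3 - b0) + (b3 + b0 - b1) by ring.
  by move: nz3; rewrite e3 L0 L1 // L2 // !addr0 eqxx.
Qed.

Lemma nowhere0_or_run_start (R : zmodType) (a : 'I_5 -> R) : (exists j, a j != 0) ->
  (forall j, a j != 0) \/ exists2 i, a i != 0 & a (sh i 4) = 0.
Proof.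
move=> [j0 nz0].
have [i /andP [nzi /eqP zi] | no_start] :=
  pickP (fun i => (a i != 0) && (a (sh i 4) == 0)); first by right; exists i.
have step i : a i != 0 -> a (sh i 1) != 0.
  have back k : a k != 0 -> a (sh k 4) != 0.
    by move=> nzk; have := no_start k; rewrite /= nzk => /negbT.
  have -> : sh i 1 = sh (sh (sh (sh i 4) 4) 4) 4.
    by apply: val_inj => /=; rewrite !val_sh; lia.
  by move/back/back/back/back.
have nz k : a (sh j0 k) != 0.
  by elim: k => [|k]; rewrite ?sh0 // -addn1 -shD; apply: step.
by left=> j; case: (sh_cases j0 j) => [|[|[|[|]]]] ->; rewrite ?nz -?[in a j0](sh0 j0).
Qed.

Definition admissible_support (pr : 'I_5 -> Prop) : Prop :=
  (exists i : 'I_5, forall j, pr j <-> j = i)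
  \/ (exists i : 'I_5, forall j, pr j <-> (j = i \/ j = sh i 1 \/ j = sh i 3))
  \/ (exists i : 'I_5, forall j, pr j <-> (j = i \/ j = sh i 1 \/ j = sh i 2))
  \/ (forall j, pr j).

Lemma admissible_support_ext (pr pr' : 'I_5 -> Prop) :
  (forall j, pr j <-> pr' j) -> admissible_support pr -> admissible_support pr'.
Proof.
move=> e [[i hi] | [[i hi] | [[i hi] | hall]]].
- by left; exists i => j; apply: iff_trans (iff_sym (e j)) (hi j).
- by right; left; exists i => j; apply: iff_trans (iff_sym (e j)) (hi j).
- by right; right; left; exists i => j; apply: iff_trans (iff_sym (e j)) (hi j).
- by right; right; right => j; apply/e.
Qed.

Lemma alt5_support (R : numDomainType) (a : 'I_5 -> R) :
  (forall j, a j != 0 -> alt5 a j = 0) -> (exists j, a j != 0) ->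
  \sum_j a j != 0 /\ admissible_support (fun j => a j != 0).
Proof.
move=> alt0 /nowhere0_or_run_start [full | [i nz0 z4]].
  have const := alt5_eq0_const (fun j => alt0 j (full j)).
  split; last by do 3 right.
  rewrite (sum_sh a ord0) !const.
  have -> : a ord0 + a ord0 + a ord0 + a ord0 + a ord0 = a ord0 *+ 5 by ring.
  by rewrite mulrn_eq0 full.
have L k : a (sh i k) != 0 ->
    a (sh i k.+1) - a (sh i k.+2) + a (sh i k.+3) - a (sh i k.+4) = 0.
  by rewrite -alt5_sh; apply: alt0.
have := L 0; rewrite sh0 z4 subr0 => /(_ nz0) L0.
have := L 1; rewrite z4 shS5 sh0 addr0 => L1.
have := L 2; rewrite z4 !shS5 sh0 subr0 => L2.
have := L 3; rewrite z4 !shS5 sh0 sub0r => L3.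
have [sum_nz] := run_support_cases nz0 L0 L1 L2 L3.
split; first by rewrite (sum_sh a i) z4 addr0.
case/or4P: b => /and3P [z1 z2 z3].
- left; exists i => j; split=> [|->//].
  case: (sh_cases i j) => [|[|[|[|]]]] ->;
    by rewrite ?(eqP z1) ?(eqP z2) ?(eqP z3) ?z4 ?eqxx.
- right; left; exists (sh i 2) => j; rewrite !shD (shS5 i 0) sh0; split.
    case: (sh_cases i j) => [|[|[|[|]]]] ->; rewrite ?(eqP z1) ?z4 ?eqxx //; tauto.
  by case=> [|[|]] ->.
- right; left; exists i => j; split; last by case=> [|[|]] ->.
  case: (sh_cases i j) => [|[|[|[|]]]] ->; rewrite ?(eqP z2) ?z4 ?eqxx //; tauto.
- right; right; left; exists i => j; split; last by case=> [|[|]] ->.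
  case: (sh_cases i j) => [|[|[|[|]]]] ->; rewrite ?(eqP z3) ?z4 ?eqxx //; tauto.
Qed.

Lemma riccati_size_lt (R : idomainType) (F D G : {poly R}) (c : R) :
  D != 0 -> (size D < size F)%N ->
  F^`() * D - F * D^`() = F * G + c%:P * (D * D) -> (size G < size D)%N.
Proof.
move=> D0 DF eqFG.
have F0 : F != 0 by rewrite -size_poly_gt0 (leq_ltn_trans _ DF).
have [-> | G0] := eqVneq G 0; first by rewrite size_poly0 size_poly_gt0.
have sD := D0; rewrite -size_poly_gt0 in sD.
pose m := (size F + size D).-1.
have t1 : (size (F^`() * D)%R < m)%N.
  by apply: leq_ltn_trans (size_polyMleq _ _) _; have := lt_size_deriv F0; lia.
have t2 : (size (F * D^`())%R < m)%N.
  by apply: leq_ltn_trans (size_polyMleq _ _) _; have := lt_size_deriv D0; lia.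
have t3 : (size (c%:P * (D * D))%R < m)%N.
  apply: leq_ltn_trans (size_polyMleq _ _) _.
  by rewrite size_mul //; have := size_polyC_leq1 c; lia.
have : (size (F * G)%R < m)%N.
  rewrite -[F * G](addrK (c%:P * (D * D))) -eqFG.
  apply: leq_ltn_trans (size_polyD _ _) _; rewrite gtn_max size_polyN t3 andbT.
  by apply: leq_ltn_trans (size_polyD _ _) _; rewrite gtn_max size_polyN t1.
by rewrite size_mul //; lia.
Qed.

Lemma coef_predn_neq0 (R : ringType) (p : {poly R}) n :
  (0 < n)%N -> (size p <= n)%N -> (p`_n.-1 != 0) = (size p == n).
Proof.
move=> n_gt0; rewrite leq_eqVlt => /orP [/eqP sp | lt_pn].
  by rewrite -sp eqxx -lead_coefE lead_coef_eq0 -size_poly_gt0 sp.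
by rewrite (ltn_eqF lt_pn) nth_default ?eqxx // -ltnS prednK.
Qed.

Lemma ltn_size_mul2r (R : idomainType) (p q e : {poly R}) : e != 0 ->
  (size (q * e)%R < size (p * e)%R)%N = (size q < size p)%N.
Proof.
move=> e0; have se := e0; rewrite -size_poly_gt0 in se.
have [-> | p0] := eqVneq p 0; first by rewrite mul0r size_poly0.
have [-> | q0] := eqVneq q 0; first by rewrite mul0r size_poly0 !size_poly_gt0 mulf_neq0.
rewrite !size_mul //; have := size_poly_gt0 p; have := size_poly_gt0 q.
by rewrite p0 q0; lia.
Qed.

Lemma eqn_size_mul2r (R : idomainType) (p q e : {poly R}) : q != 0 -> e != 0 ->
  (size (p * e)%R == (size (q * e)%R).+1) = (size p == (size q).+1).
Proof.
move=> q0 e0; have [-> | p0] := eqVneq p 0; first by rewrite mul0r size_poly0.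
rewrite !size_mul //; have := size_poly_gt0 p; have := size_poly_gt0 q.
have := size_poly_gt0 e; rewrite p0 q0 e0; lia.
Qed.

Lemma ratf_mul2r (C : fieldType) (p q e : {poly C}) : e != 0 ->
  ratf (p * e) (q * e) = ratf p q.
Proof. by move=> e0; rewrite /ratf !tofracM -mulf_div divff ?mulr1 ?tofrac_eq0. Qed.

Lemma ratd_mul2r (C : fieldType) (p q e : {poly C}) : e != 0 ->
  ratd (p * e) (q * e) = ratd p q.
Proof.
move=> e0; rewrite /ratd !derivM.
have -> : (p^`() * e + p * e^`()) * (q * e) - p * e * (q^`() * e + q * e^`()) =
  (p^`() * q - p * q^`()) * (e * e) by ring.
rewrite (_ : q * e * (q * e) = q * q * (e * e)); last by ring.
by rewrite !tofracM -mulf_div divff ?mulr1 // mulf_neq0 ?tofrac_eq0.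
Qed.

Definition comden (R : comRingType) (I : finType) (Q : I -> {poly R}) : {poly R} :=
  \prod_k Q k.

Definition comnum (R : comRingType) (I : finType) (P Q : I -> {poly R}) (k : I) :
  {poly R} := P k * \prod_(l | l != k) Q l.

Definition max_size (R : ringType) (I : finType) (F : I -> {poly R}) : nat :=
  \max_k size (F k).

Definition top_coef (R : ringType) (I : finType) (F : I -> {poly R}) (k : I) : R :=
  (F k)`_(max_size F).-1.

Lemma size_le_max_size (R : ringType) (I : finType) (F : I -> {poly R}) k :
  (size (F k) <= max_size F)%N.
Proof. exact: leq_bigmax. Qed.

Lemma comdenE (R : comRingType) (I : finType) (Q : I -> {poly R}) k :
  comden Q = Q k * \prod_(l | l != k) Q l.
Proof. exact: bigD1. Qed.

Lemma ratf_alt5 (C : fieldType) (F : 'I_5 -> {poly C}) d j :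
  alt5 (fun k => ratf (F k) d) j = ratf (alt5 F j) d.
Proof. by rewrite /alt5 /ratf !(tofracD, tofracN) !(mulrDl, mulNr). Qed.

Lemma ratf_riccati (C : fieldType) (f d g : {poly C}) (c : C) : d != 0 ->
  ratd f d = ratf f d * ratf g d + ratc c ->
  f^`() * d - f * d^`() = f * g + c%:P * (d * d).
Proof.
move=> d0 eq_fg; have dd0 : (d * d)%:F != 0 by rewrite tofrac_eq0 mulf_neq0.
apply/eqP; rewrite -tofrac_eq.
have -> : (f^`() * d - f * d^`())%:F = ratd f d * (d * d)%:F.
  by rewrite /ratd divfK.
by rewrite eq_fg /ratf /ratc mulrDl mulf_div -!tofracM divfK // -tofracD.
Qed.

Section CommonDenominator.
Variables (C : fieldType) (alpha : 'I_5 -> C) (P Q : 'I_5 -> {poly C}).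
Hypothesis sol : A4_rational_solution alpha P Q.
Local Notation D := (comden Q).
Local Notation F := (comnum P Q).

Lemma comden_neq0 : D != 0.
Proof. by case: sol => Q0 _; apply/prodf_neq0 => k _. Qed.

Lemma cofactor_neq0 k : \prod_(l | l != k) Q l != 0.
Proof. by case: sol => Q0 _; apply/prodf_neq0 => l _. Qed.

Lemma ratf_comnum k : ratf (P k) (Q k) = ratf (F k) D.
Proof. by rewrite (comdenE Q k) ratf_mul2r ?cofactor_neq0. Qed.

Lemma ratd_comnum k : ratd (P k) (Q k) = ratd (F k) D.
Proof. by rewrite (comdenE Q k) ratd_mul2r ?cofactor_neq0. Qed.

Lemma comnum_riccati j :
  (F j)^`() * D - F j * D^`() = F j * alt5 F j + (alpha j)%:P * (D * D).
Proof.
case: sol => _ [eqn _].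
apply: ratf_riccati comden_neq0 _.
by rewrite -ratd_comnum eqn -ratf_alt5 /alt5 !ratf_comnum.
Qed.

Lemma sum_comnum : \sum_k F k = 'X * D.
Proof.
case: sol => _ [_ sum_f].
have dD : D%:F != 0 by rewrite tofrac_eq0 comden_neq0.
apply/eqP; rewrite -tofrac_eq rmorph_sum tofracM -sum_f mulr_suml.
by apply/eqP/eq_bigr => k _; rewrite ratf_comnum /ratf divfK.
Qed.

Lemma pole_comnum k : pole_at_infty (P k) (Q k) <-> (size D < size (F k))%N.
Proof. by rewrite /pole_at_infty (comdenE Q k) ltn_size_mul2r ?cofactor_neq0. Qed.

Lemma simple_pole_comnum k :
  simple_pole_at_infty (P k) (Q k) <-> size (F k) = (size D).+1.
Proof.
case: sol => Q0 _; rewrite /simple_pole_at_infty /comnum (comdenE Q k).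
have e := eqn_size_mul2r (P k) (Q0 k) (cofactor_neq0 k).
by split=> /eqP; [rewrite -e | rewrite e] => /eqP.
Qed.

Local Notation M := (max_size F).

Hypothesis pole : exists j, pole_at_infty (P j) (Q j).

Lemma comden_lt_max_size : (size D < M)%N.
Proof. by case: pole => j /pole_comnum /leq_trans; apply; apply: size_le_max_size. Qed.

Lemma top_coefE k : (top_coef F k != 0) = (size (F k) == M).
Proof.
apply: coef_predn_neq0 (size_le_max_size _ k).
exact: leq_ltn_trans (leq0n _) comden_lt_max_size.
Qed.

Lemma top_coef_alt5 j : top_coef F j != 0 -> alt5 (top_coef F) j = 0.
Proof.
rewrite top_coefE => /eqP sFj.
have := riccati_size_lt comden_neq0 _ (comnum_riccati j).
rewrite sFj => /(_ comden_lt_max_size) lt_alt.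
have -> : alt5 (top_coef F) j = (alt5 F j)`_M.-1 by rewrite /alt5 !(coefB, coefD).
apply: nth_default; rewrite -ltnS (ltn_predK comden_lt_max_size).
exact: ltn_trans lt_alt comden_lt_max_size.
Qed.

Lemma top_coef_exists : exists j, top_coef F j != 0.
Proof.
have [k Mk] : {k | M = size (F k)} by apply: bigop.eq_bigmax; rewrite card_ord.
by exists k; rewrite top_coefE Mk.
Qed.

Lemma max_size_comnum : \sum_k top_coef F k != 0 -> M = (size D).+1.
Proof.
have sD := comden_neq0; rewrite -size_poly_gt0 in sD.
have DM := comden_lt_max_size.
rewrite -coef_sum sum_comnum coefXM -subn1 ifN; last by apply/eqP; lia.
apply: contraTeq => M_neq; rewrite negbK nth_default // -!subn1.
(* The occurrences of [M] differ in their (convertible) instance paths, which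
   lia would treat as distinct atoms. *)
move: DM M_neq; move: (size D) M => d m; lia.
Qed.

Hypothesis M1 : M = (size D).+1.

Lemma pole_top_coef k : pole_at_infty (P k) (Q k) <-> top_coef F k != 0.
Proof.
have := size_le_max_size F k; rewrite pole_comnum top_coefE M1.
by move=> le; split=> [lt | /eqP ->//]; rewrite eqn_leq le.
Qed.

Lemma pole_simple k : pole_at_infty (P k) (Q k) -> simple_pole_at_infty (P k) (Q k).
Proof.
have := size_le_max_size F k; rewrite pole_comnum simple_pole_comnum M1.
by move=> le lt; apply/eqP; rewrite eqn_leq le.
Qed.

End CommonDenominator.


Theorem proposition1p1 (C : numClosedFieldType) (alpha : 'I_5 -> C)
    (P Q : 'I_5 -> {poly C}) :
  A4_rational_solution alpha P Q ->
  (exists j, pole_at_infty (P j) (Q j)) ->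
  (forall j, pole_at_infty (P j) (Q j) -> simple_pole_at_infty (P j) (Q j)) /\
  ((exists i : 'I_5, forall j,
       pole_at_infty (P j) (Q j) <-> j = i)
   \/ (exists i : 'I_5, forall j,
       pole_at_infty (P j) (Q j) <-> (j = i \/ j = sh i 1 \/ j = sh i 3))
   \/ (exists i : 'I_5, forall j,
       pole_at_infty (P j) (Q j) <-> (j = i \/ j = sh i 1 \/ j = sh i 2))
   \/ (forall j, pole_at_infty (P j) (Q j))).
Proof.
move=> sol pole.
have [sum_nz support] := alt5_support (top_coef_alt5 sol pole) (top_coef_exists sol pole).
have M1 := max_size_comnum sol pole sum_nz.
split; first exact: pole_simple sol M1.
apply: admissible_support_ext support => j.
by symmetry; apply: pole_top_coef sol pole M1 j.
Qed.
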